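(* Let $\mathcal C$ be a pointed category with finite coproducts, $E\in\mathcal C$, and $M$ a proto-quadratic $\mathcal C$-module relative to $E$. Then the functor $-\otimes M\colon\mathcal C\to Ab$ (quadratic tensor product) is a quadratic functor, i.e. its third cross-effect vanishes.
   Context: Notation. - $i_k,r_k$ are the coproduct injections and retractions, $\nabla$ the folding map, $\tau$ the switch. Functors and cross-effects. - For a reduced functor $F\colon\mathcal C\to Ab$: $cr_2F(X,Y)=\ker(F(X\vee Y)\to F(X)\oplus F(Y))$ and $cr_3F(X,Y,Z)=cr_2(cr_2F(-,Z))(X,Y)$; $F$ is quadratic if $cr_3F=0$. - $T_1F(X)=\mathrm{coker}(cr_2F(X,X)\subseteq F(X\vee X)\xrightarrow{F(\nabla)}F(X))$, with projection $t_1$. - For a bireduced bifunctor $B$, $T_{11}B$ is the quotient of $B(X,Y)$ by the images of $cr_2(B(-,Y))(X,X)$ under $B(\nabla,1)$ and of $cr_2(B(X,-))(Y,Y)$ under $B(1,\nabla)$; $t_{11}$ is the projection. The functor $U$ and the rings. - $U(X)=\mathbb Z[\mathcal C(E,X)]/\mathbb Z\cdot0$; $\Lambda=U(E)$ is a ring under composition; $\bar\Lambda=T_1U(E)$ and $\bar\alpha=t_1\alpha$. Proto-quadratic $\mathcal C$-modules. - $U(E|E)=cr_2U(E,E)$ has $\Lambda\otimes\Lambda$-action via $U(\alpha\vee\beta)$, involution $U(\tau)$ and right $\Lambda$-action by precomposition, descending to $T_{11}(cr_2U)(E,E)$. - $\rho(\xi)=\xi-i_1r_1\xi-i_2r_2\xi$.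 - A symmetric $R\otimes R$-module is a left module with involution $T$ satisfying $T((r\otimes s)m)=(s\otimes r)Tm$. - A proto-quadratic $\mathcal C$-module is $M=(T_{11}(cr_2U)(E,E)\otimes_\Lambda M_e\xrightarrow{\hat H}M_{ee}\xrightarrow{T}M_{ee}\xrightarrow{P}M_e)$ such that: - $M_e$ is a left $\Lambda$-module; - $M_{ee}$ is a symmetric $\bar\Lambda\otimes\bar\Lambda$-module with involution $T$; - $P((\bar\alpha\otimes\bar\alpha)m)=\alpha Pm$ and $PT=P$; - $\hat H$ is a symmetric-module homomorphism; - (QM1) $(\nabla\xi)a=(r_1\xi)a+(r_2\xi)a+P\hat H(t_{11}\rho(\xi)\otimes a)$. Quadratic tensor product. $X\otimes M$ is the abelian group generated by $f\otimes a$ and $[f,g]\otimes m$ ($f,g\in\mathcal C(E,X)$), subject to: 1. $f\beta\otimes a=f\otimes\beta a$; 2. additivity in $a$; 3. $\sum_{\emptyset\ne S\subseteq\{1,2,3\}}(-1)^{3-|S|}\epsilon_S\xi\otimes a=0$ for $\xi\in\mathcal C(E,X^{\vee3})$, where $\epsilon_S$ is the identity on the summands in $S$ and zero elsewhere; 4. $[f\alpha,g\beta]\otimes m=[f,g]\otimes(\bar\alpha\otimes\bar\beta)m$; 5. additivity in $m$; 6. $[\nabla\xi,g]\otimes m=[r_1\xi,g]\otimes m+[r_2\xi,g]\otimes m$; 7. $[f,g]\otimes m=[g,f]\otimes Tm$; 8. $[f,f]\otimes m=f\otimes Pm$; 9. $(f,g)\gamma\otimes a=fr_1\gamma\otimes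 a+gr_2\gamma\otimes a+[f,g]\otimes\hat H(t_{11}\rho(\gamma)\otimes a)$. A morphism $h$ acts by $f\mapsto hf$ in the symbols. *)

From HB Require Import structures.
From mathcomp Require Import all_boot all_algebra.
Set Implicit Arguments. Unset Strict Implicit. Unset Printing Implicit Defensive.
Import GRing.Theory.
Local Open Scope ring_scope.

Record PCat := {
  obj :> Type;
  hom : obj -> obj -> Type;
  idm : forall X, hom X X;
  comp : forall X Y Z, hom Y Z -> hom X Y -> hom X Z;
  comp_idl : forall X Y (f : hom X Y), comp (idm Y) f = f;
  comp_idr : forall X Y (f : hom X Y), comp f (idm X) = f;
  comp_assoc : forall X Y Z W (h : hom Z W) (g : hom Y Z) (f : hom X Y),
      comp h (comp g f) = comp (comp h g) f;
  zobj : obj;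
  zto : forall X, hom X zobj;
  zfrom : forall X, hom zobj X;
  zto_uniq : forall X (f : hom X zobj), f = zto X;
  zfrom_uniq : forall X (f : hom zobj X), f = zfrom X;
  cop : obj -> obj -> obj;
  in1 : forall X Y, hom X (cop X Y);
  in2 : forall X Y, hom Y (cop X Y);
  copair : forall X Y Z, hom X Z -> hom Y Z -> hom (cop X Y) Z;
  copair_in1 : forall X Y Z (f : hom X Z) (g : hom Y Z),
      comp (copair f g) (in1 X Y) = f;
  copair_in2 : forall X Y Z (f : hom X Z) (g : hom Y Z),
      comp (copair f g) (in2 X Y) = g;
  copair_uniq : forall X Y Z (f : hom X Z) (g : hom Y Z) (h : hom (cop X Y) Z),
      comp h (in1 X Y) = f -> comp h (in2 X Y) = g -> h = copair f g
}.
Arguments hom {p} _ _.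
Arguments idm {p} X.
Arguments comp {p X Y Z} _ _.
Arguments zobj {p}.
Arguments zto {p} X.
Arguments zfrom {p} X.
Arguments cop {p} _ _.
Arguments in1 {p} X Y.
Arguments in2 {p} X Y.
Arguments copair {p X Y Z} _ _.

Section CatDefs.
Variable C : PCat.
Definition zerom (X Y : C) : hom X Y := comp (zfrom Y) (zto X).
Definition ret1 (X Y : C) : hom (cop X Y) X := copair (idm X) (zerom Y X).
Definition ret2 (X Y : C) : hom (cop X Y) Y := copair (zerom X Y) (idm Y).
Definition fold (X : C) : hom (cop X X) X := copair (idm X) (idm X).
Definition swap (X Y : C) : hom (cop X Y) (cop Y X) := copair (in2 Y X) (in1 Y X).
Definition summ (X Y X' Y' : C) (f : hom X X') (g : hom Y Y')
  : hom (cop X Y) (cop X' Y') := copair (comp (in1 X' Y') f) (comp (in2 X' Y') g).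
End CatDefs.
Arguments zerom {C} X Y.
Arguments ret1 {C} X Y.
Arguments ret2 {C} X Y.
Arguments fold {C} X.
Arguments swap {C} X Y.
Arguments summ {C X Y X' Y'} f g.

(* fterm G = formal Z-linear expressions in generators G; pres_eq R is the   *)
(* congruence: equal in the abelian group generated by G subject to the      *)
(* relations t = 0 for R t, i.e. the free abelian group Z[G] modulo the     *)
(* subgroup generated by R.                                                  *)
Inductive fterm (G : Type) : Type :=
  | FZ | FG of G | FAdd of fterm G & fterm G | FOpp of fterm G.
Arguments FZ {G}.
Arguments FG {G} _.
Arguments FAdd {G} _ _.
Arguments FOpp {G} _.

Definition FSub (G : Type) (t u : fterm G) := FAdd t (FOpp u).

Fixpoint fmap (G H : Type) (h : G -> H) (t : fterm G) : fterm H :=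
  match t with
  | FZ => FZ
  | FG g => FG (h g)
  | FAdd t1 t2 => FAdd (fmap h t1) (fmap h t2)
  | FOpp t1 => FOpp (fmap h t1)
  end.

Fixpoint feval (G : Type) (V : zmodType) (v : G -> V) (t : fterm G) : V :=
  match t with
  | FZ => 0
  | FG g => v g
  | FAdd t1 t2 => feval v t1 + feval v t2
  | FOpp t1 => - feval v t1
  end.

Inductive pres_eq (G : Type) (R : fterm G -> Prop) : fterm G -> fterm G -> Prop :=
  | pe_refl t : pres_eq R t t
  | pe_sym t u : pres_eq R t u -> pres_eq R u t
  | pe_trans t u v : pres_eq R t u -> pres_eq R u v -> pres_eq R t v
  | pe_add t t' u u' : pres_eq R t t' -> pres_eq R u u' ->
      pres_eq R (FAdd t u) (FAdd t' u')
  | pe_opp t t' : pres_eq R t t' -> pres_eq R (FOpp t) (FOpp t')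
  | pe_assoc t u v : pres_eq R (FAdd (FAdd t u) v) (FAdd t (FAdd u v))
  | pe_comm t u : pres_eq R (FAdd t u) (FAdd u t)
  | pe_zerol t : pres_eq R (FAdd FZ t) t
  | pe_oppl t : pres_eq R (FAdd (FOpp t) t) FZ
  | pe_rel t : R t -> pres_eq R t FZ.

(* The functor U(X) = Z[C(E,X)] / Z.0, on representatives.                   *)
Section UFunctor.
Variables (C : PCat) (E : C).

Definition Urel (X : C) (t : fterm (hom E X)) : Prop := t = FG (zerom E X).
Definition Ueq (X : C) := pres_eq (@Urel X).
Definition Umap (X Y : C) (h : hom X Y) := fmap (fun f : hom E X => comp h f).

(* u in cr_2 U(X,Y) = ker (U(X v Y) -> U(X) (+) U(Y)) *)
Definition in_cr2U (X Y : C) (u : fterm (hom E (cop X Y))) : Prop :=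
  Ueq (Umap (ret1 X Y) u) FZ /\ Ueq (Umap (ret2 X Y) u) FZ.

(* w in cr_2(B(-,E))(E,E) where B = cr_2U, as a subgroup of U((EvE)vE) *)
Definition in_cr2_left (w : fterm (hom E (cop (cop E E) E))) : Prop :=
  in_cr2U w /\
  Ueq (Umap (summ (ret1 E E) (idm E)) w) FZ /\
  Ueq (Umap (summ (ret2 E E) (idm E)) w) FZ.

(* w in cr_2(B(E,-))(E,E), as a subgroup of U(Ev(EvE)) *)
Definition in_cr2_right (w : fterm (hom E (cop E (cop E E)))) : Prop :=
  in_cr2U w /\
  Ueq (Umap (summ (idm E) (ret1 E E)) w) FZ /\
  Ueq (Umap (summ (idm E) (ret2 E E)) w) FZ.

Definition rho (xi : hom E (cop E E)) : fterm (hom E (cop E E)) :=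
  FSub (FSub (FG xi) (FG (comp (in1 E E) (comp (ret1 E E) xi))))
       (FG (comp (in2 E E) (comp (ret2 E E) xi))).

Definition Uprecomp (X : C) (lam : hom E E) :=
  fmap (fun f : hom E X => comp f lam).
End UFunctor.

(*  - lact : left Lambda-module structure on M_e, Lambda = Z[C(E,E)]/Z.0,  *)
(*    given on the additive basis C(E,E) (a ring map Z[C(E,E)] -> End(M_e)  *)
(*    killing 0 is the same as a monoid action by additive maps with 0 ->0).*)
(*  - actb : the (bar Lambda (x) bar Lambda)-action on M_ee, given on basis *)
(*    tensors alpha (x) beta, factoring through                             *)
(*    bar Lambda = T_1 U(E) = U(E) / U(fold)(cr_2U(E,E)) in each variable.  *)
(*  - H : the homomorphism hat H : T_11(cr_2U)(E,E) (x)_Lambda M_e -> M_ee, *)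
(*    given as a function on (representatives u of cr_2U(E,E)) x M_e that   *)
(*    respects all the defining relations of that tensor product (values   *)
(*    on terms u not in cr_2U(E,E) are irrelevant).                        *)
Record ProtoQuad (C : PCat) (E : C) := {
  Me : zmodType;
  Mee : zmodType;
  lact : hom E E -> Me -> Me;
  actb : hom E E -> hom E E -> Mee -> Mee;
  Tinv : Mee -> Mee;
  Pm : Mee -> Me;
  Hh : fterm (hom E (cop E E)) -> Me -> Mee;
  lact_add : forall al a b, lact al (a + b) = lact al a + lact al b;
  lact_id : forall a, lact (idm E) a = a;
  lact_comp : forall al be a, lact (comp al be) a = lact al (lact be a);
  lact_zero : forall a, lact (zerom E E) a = 0;
  actb_add : forall al be m n, actb al be (m + n) = actb al be m + actb al be n;
  actb_id : forall m, actb (idm E) (idm E) m = m;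
  actb_comp : forall al al' be be' m,
      actb (comp al al') (comp be be') m = actb al be (actb al' be' m);
  actb_zerol : forall be m, actb (zerom E E) be m = 0;
  actb_zeror : forall al m, actb al (zerom E E) m = 0;
  actb_T1l : forall (u : fterm (hom E (cop E E))) be m, in_cr2U u ->
      feval (fun al => actb al be m) (Umap (fold E) u) = 0;
  actb_T1r : forall (u : fterm (hom E (cop E E))) al m, in_cr2U u ->
      feval (fun be => actb al be m) (Umap (fold E) u) = 0;
  T_add : forall m n, Tinv (m + n) = Tinv m + Tinv n;
  T_invol : forall m, Tinv (Tinv m) = m;
  T_actb : forall al be m, Tinv (actb al be m) = actb be al (Tinv m);
  P_add : forall m n, Pm (m + n) = Pm m + Pm n;
  P_actb : forall al m, Pm (actb al al m) = lact al (Pm m);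
  P_T : forall m, Pm (Tinv m) = Pm m;
  H_compat : forall u u' a, in_cr2U u -> in_cr2U u' -> Ueq u u' -> Hh u a = Hh u' a;
  H_addl : forall u u' a, in_cr2U u -> in_cr2U u' ->
      Hh (FAdd u u') a = Hh u a + Hh u' a;
  H_addr : forall u a b, in_cr2U u -> Hh u (a + b) = Hh u a + Hh u b;
  H_T11l : forall w a, in_cr2_left w -> Hh (Umap (summ (fold E) (idm E)) w) a = 0;
  H_T11r : forall w a, in_cr2_right w -> Hh (Umap (summ (idm E) (fold E)) w) a = 0;
  H_bal : forall u lam a, in_cr2U u -> Hh (Uprecomp lam u) a = Hh u (lact lam a);
  H_actb : forall u al be a, in_cr2U u ->
      Hh (Umap (summ al be) u) a = actb al be (Hh u a);
  H_T : forall u a, in_cr2U u -> Hh (Umap (swap E E) u) a = Tinv (Hh u a);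
  QM1 : forall (xi : hom E (cop E E)) a,
      lact (comp (fold E) xi) a =
      lact (comp (ret1 E E) xi) a + lact (comp (ret2 E E) xi) a
      + Pm (Hh (rho xi) a)
}.
Arguments Me {C E} _.
Arguments Mee {C E} _.
Arguments lact {C E} _ _ _.
Arguments actb {C E} _ _ _ _.
Arguments Tinv {C E} _ _.
Arguments Pm {C E} _ _.
Arguments Hh {C E} _ _ _.

Section Tensor.
Variables (C : PCat) (E : C) (M : ProtoQuad E).

Inductive tgen (X : C) : Type :=
  | TG1 of hom E X & Me M
  | TG2 of hom E X & hom E X & Mee M.

Definition epsm (X : C) (b1 b2 b3 : bool) : hom (cop (cop X X) X) X :=
  let e b := if b then idm X else zerom X X in
  copair (copair (e b1) (e b2)) (e b3).

Inductive tensor_rel (X : C) : fterm (tgen X) -> Prop :=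
  | tr1 (f : hom E X) (be : hom E E) (a : Me M) :
      tensor_rel (FSub (FG (TG1 (comp f be) a)) (FG (TG1 f (lact M be a))))
  | tr2 (f : hom E X) (a b : Me M) :
      tensor_rel (FSub (FG (TG1 f (a + b))) (FAdd (FG (TG1 f a)) (FG (TG1 f b))))
  | tr3 (xi : hom E (cop (cop X X) X)) (a : Me M) :
      let s (b1 b2 b3 : bool) := FG (TG1 (comp (@epsm X b1 b2 b3) xi) a) in
      tensor_rel
        (FAdd (FSub (FSub (FSub (s true true true) (s true true false))
                          (s true false true)) (s false true true))
              (FAdd (s true false false) (FAdd (s false true false) (s false false true))))
  | tr4 (f g : hom E X) (al be : hom E E) (m : Mee M) :
      tensor_rel (FSub (FG (TG2 (comp f al) (comp g be) m))
                       (FG (TG2 f g (actb M al be m))))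
  | tr5 (f g : hom E X) (m n : Mee M) :
      tensor_rel (FSub (FG (TG2 f g (m + n)))
                       (FAdd (FG (TG2 f g m)) (FG (TG2 f g n))))
  | tr6 (xi : hom E (cop X X)) (g : hom E X) (m : Mee M) :
      tensor_rel (FSub (FG (TG2 (comp (fold X) xi) g m))
                       (FAdd (FG (TG2 (comp (ret1 X X) xi) g m))
                             (FG (TG2 (comp (ret2 X X) xi) g m))))
  | tr7 (f g : hom E X) (m : Mee M) :
      tensor_rel (FSub (FG (TG2 f g m)) (FG (TG2 g f (Tinv M m))))
  | tr8 (f : hom E X) (m : Mee M) :
      tensor_rel (FSub (FG (TG2 f f m)) (FG (TG1 f (Pm M m))))
  | tr9 (f g : hom E X) (ga : hom E (cop E E)) (a : Me M) :
      tensor_rel (FSub (FG (TG1 (comp (copair f g) ga) a))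
                       (FAdd (FAdd (FG (TG1 (comp f (comp (ret1 E E) ga)) a))
                                   (FG (TG1 (comp g (comp (ret2 E E) ga)) a)))
                             (FG (TG2 f g (Hh M (rho ga) a))))).

Definition teq (X : C) := pres_eq (@tensor_rel X).

Definition tgen_map (X Y : C) (h : hom X Y) (x : tgen X) : tgen Y :=
  match x with
  | TG1 f a => TG1 (comp h f) a
  | TG2 f g m => TG2 (comp h f) (comp h g) m
  end.
Definition tmap (X Y : C) (h : hom X Y) := fmap (tgen_map h).

(* t represents an element of cr_3(- (x) M)(X,Y,Z)
   = cr_2(cr_2(- (x) M)(-,Z))(X,Y), a subgroup of ((X v Y) v Z) (x) M:
   its images in (XvY)(x)M and Z(x)M vanish (so it is in cr_2(-(x)M)(XvY,Z)),
   and its images under r1 v 1 and r2 v 1 in X v Z and Y v Z vanish. *)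
Definition in_cr3_tensor (X Y Z : C) (t : fterm (tgen (cop (cop X Y) Z))) : Prop :=
  teq (tmap (ret1 (cop X Y) Z) t) FZ /\
  teq (tmap (ret2 (cop X Y) Z) t) FZ /\
  teq (tmap (summ (ret1 X Y) (idm Z)) t) FZ /\
  teq (tmap (summ (ret2 X Y) (idm Z)) t) FZ.

Definition tensor_quadratic : Prop :=
  forall (X Y Z : C) (t : fterm (tgen (cop (cop X Y) Z))),
    in_cr3_tensor t -> teq t FZ.
End Tensor.

(* Write W = (X v Y) v Z and e_S : W -> W for the idempotent keeping the
   summands indexed by S and killing the others.  Every generator x of W (x) M
   satisfies the inclusion-exclusion identity
     x = sum_{|S| = 2} e_S x - sum_{|S| = 1} e_S x :
   for f (x) a this is relation 3 applied to a map E -> (W v W) v W, and for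
   [f, g] (x) m it follows from additivity of the bracket in each variable
   (relation 6, and relation 7 for the second variable).  Each of the six e_S
   factors through one of the four retractions defining cr_3, so every element
   of the third cross-effect is zero. *)

From HB Require Import structures.
From mathcomp Require Import all_boot all_algebra.
From mathcomp Require Import boolp.
Set Implicit Arguments. Unset Strict Implicit. Unset Printing Implicit Defensive.
Import GRing.Theory.
Local Open Scope ring_scope.

Section Presented.
Variables (G : Type) (R : fterm G -> Prop).
Local Notation peq := (pres_eq R).

Lemma peq_class t u : peq t u -> peq t = peq u.
Proof.
move=> tu; apply/funext => v; apply/propext; split => [tv|uv].
  exact: pe_trans (pe_sym tu) tv.
exact: pe_trans tu uv.
Qed.

Definition presented := {P : fterm G -> Prop | exists t, P = peq t}.
Definition pcls (t : fterm G) : presented := exist _ (peq t) (ex_intro _ t erefl).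

Lemma pcls_eqP t u : pcls t = pcls u <-> peq t u.
Proof.
split=> [tu|tu]; last by apply: eq_exist; apply: peq_class.
have /= -> : proj1_sig (pcls t) = proj1_sig (pcls u) by rewrite tu.
exact: pe_refl.
Qed.

Definition prep (q : presented) : fterm G := proj1_sig (cid (proj2_sig q)).

Lemma prepK q : pcls (prep q) = q.
Proof. by case: q => P hP; rewrite /prep /=; case: (cid hP) => t ht; apply: eq_exist. Qed.

Lemma peq_prep t : peq (prep (pcls t)) t.
Proof. by apply/pcls_eqP; rewrite prepK. Qed.

HB.instance Definition _ := gen_eqMixin presented.
HB.instance Definition _ := gen_choiceMixin presented.

Definition padd (a b : presented) := pcls (FAdd (prep a) (prep b)).
Definition popp (a : presented) := pcls (FOpp (prep a)).

Lemma paddE t u : padd (pcls t) (pcls u) = pcls (FAdd t u).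
Proof. by apply/pcls_eqP; apply: pe_add; apply: peq_prep. Qed.

Lemma poppE t : popp (pcls t) = pcls (FOpp t).
Proof. by apply/pcls_eqP; apply: pe_opp; apply: peq_prep. Qed.

Lemma paddA : associative padd.
Proof.
move=> a b c; rewrite -(prepK a) -(prepK b) -(prepK c) !paddE.
by apply/pcls_eqP/pe_sym/pe_assoc.
Qed.

Lemma paddC : commutative padd.
Proof. by move=> a b; rewrite -(prepK a) -(prepK b) !paddE; apply/pcls_eqP/pe_comm. Qed.

Lemma add0p : left_id (pcls FZ) padd.
Proof. by move=> a; rewrite -(prepK a) paddE; apply/pcls_eqP/pe_zerol. Qed.

Lemma addNp : left_inverse (pcls FZ) popp padd.
Proof. by move=> a; rewrite -(prepK a) poppE paddE; apply/pcls_eqP/pe_oppl. Qed.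

HB.instance Definition _ := GRing.isZmodule.Build presented paddA paddC add0p addNp.

Lemma pclsD t u : pcls (FAdd t u) = pcls t + pcls u.
Proof. by rewrite -paddE. Qed.

Lemma pclsN t : pcls (FOpp t) = - pcls t.
Proof. by rewrite -poppE. Qed.

Lemma pclsB t u : pcls (FSub t u) = pcls t - pcls u.
Proof. by rewrite /FSub pclsD pclsN. Qed.

Lemma pcls_rel t : R t -> pcls t = 0.
Proof. by move=> Rt; apply/pcls_eqP; apply: pe_rel. Qed.

Lemma pcls_feval t : pcls t = feval (fun x => pcls (FG x)) t.
Proof. by elim: t => //= [t IHt u IHu|t IHt]; rewrite ?pclsD ?pclsN ?IHt ?IHu. Qed.

End Presented.

Section Feval.
Variables (G : Type) (V : zmodType).

Lemma eq_feval (F1 F2 : G -> V) t : F1 =1 F2 -> feval F1 t = feval F2 t.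
Proof. by move=> eF; elim: t => //= [t IHt u IHu|t IHt]; rewrite ?IHt ?IHu. Qed.

Lemma feval_fmap (H : Type) (F : H -> V) (h : G -> H) t :
  feval F (fmap h t) = feval (fun x => F (h x)) t.
Proof. by elim: t => //= [t IHt u IHu|t IHt]; rewrite ?IHt ?IHu. Qed.

Lemma fevalD (F1 F2 : G -> V) t :
  feval (fun x => F1 x + F2 x) t = feval F1 t + feval F2 t.
Proof.
elim: t => //= [|t IHt u IHu|t IHt]; first by rewrite addr0.
  by rewrite IHt IHu addrACA.
by rewrite IHt opprD.
Qed.

Lemma fevalN (F : G -> V) t : feval (fun x => - F x) t = - feval F t.
Proof. by elim: t => //= [|t IHt u IHu|t IHt]; rewrite ?oppr0 ?IHt ?IHu ?opprD. Qed.

Lemma fevalB (F1 F2 : G -> V) t :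
  feval (fun x => F1 x - F2 x) t = feval F1 t - feval F2 t.
Proof. by rewrite fevalD fevalN. Qed.

End Feval.

Section CopLemmas.
Variable C : PCat.

Lemma comp_zeroml (X Y Z : C) (f : hom X Y) : comp (zerom Y Z) f = zerom X Z.
Proof. by rewrite /zerom -comp_assoc (zto_uniq (comp (zto Y) f)). Qed.

Lemma comp_zeromr (X Y Z : C) (h : hom Y Z) : comp h (zerom X Y) = zerom X Z.
Proof. by rewrite /zerom comp_assoc (zfrom_uniq (comp h (zfrom Y))). Qed.

Lemma copair_in1_comp (X Y Z W : C) (f : hom X Z) (g : hom Y Z) (k : hom W X) :
  comp (copair f g) (comp (in1 X Y) k) = comp f k.
Proof. by rewrite comp_assoc copair_in1. Qed.

Lemma copair_in2_comp (X Y Z W : C) (f : hom X Z) (g : hom Y Z) (k : hom W Y) :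
  comp (copair f g) (comp (in2 X Y) k) = comp g k.
Proof. by rewrite comp_assoc copair_in2. Qed.

Lemma cop_hom_ext (X Y T : C) (h h' : hom (cop X Y) T) :
  comp h (in1 X Y) = comp h' (in1 X Y) -> comp h (in2 X Y) = comp h' (in2 X Y) ->
  h = h'.
Proof.
move=> e1 e2; rewrite (copair_uniq (erefl _) (erefl _) : h = _).
by apply: esym; apply: copair_uniq; rewrite -?e1 -?e2.
Qed.

Lemma cop3_hom_ext (X Y Z T : C) (h h' : hom (cop (cop X Y) Z) T) :
  comp h (comp (in1 _ Z) (in1 X Y)) = comp h' (comp (in1 _ Z) (in1 X Y)) ->
  comp h (comp (in1 _ Z) (in2 X Y)) = comp h' (comp (in1 _ Z) (in2 X Y)) ->
  comp h (in2 _ Z) = comp h' (in2 _ Z) -> h = h'.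
Proof. by move=> e1 e2 e3; apply: cop_hom_ext => //; apply: cop_hom_ext; rewrite -!comp_assoc. Qed.

Lemma comp_copair (X Y Z T : C) (h : hom Z T) (f : hom X Z) (g : hom Y Z) :
  comp h (copair f g) = copair (comp h f) (comp h g).
Proof. by apply: copair_uniq; rewrite -comp_assoc ?copair_in1 ?copair_in2. Qed.

End CopLemmas.

Ltac cop_simpl :=
  rewrite -?comp_assoc;
  repeat rewrite ?copair_in1 ?copair_in2 ?copair_in1_comp ?copair_in2_comp
                 ?comp_idl ?comp_idr ?comp_zeroml ?comp_zeromr -?comp_assoc.

Section Naturality.
Variables (C : PCat) (X Y : C) (h : hom X Y).

Lemma comp_fold : comp h (fold X) = comp (fold Y) (summ h h).
Proof. by apply: cop_hom_ext; rewrite /fold /summ; cop_simpl. Qed.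

Lemma comp_ret1 : comp h (ret1 X X) = comp (ret1 Y Y) (summ h h).
Proof. by apply: cop_hom_ext; rewrite /ret1 /summ; cop_simpl. Qed.

Lemma comp_ret2 : comp h (ret2 X X) = comp (ret2 Y Y) (summ h h).
Proof. by apply: cop_hom_ext; rewrite /ret2 /summ; cop_simpl. Qed.

Lemma comp_epsm b1 b2 b3 :
  comp h (epsm X b1 b2 b3) = comp (epsm Y b1 b2 b3) (summ (summ h h) h).
Proof. by apply: cop3_hom_ext; rewrite /epsm /summ; case: b1; case: b2; case: b3; cop_simpl. Qed.

End Naturality.

Section TensorFunctor.
Variables (C : PCat) (E : C) (M : ProtoQuad E) (X Y : C) (h : hom X Y).

Lemma tensor_rel_tmap t : tensor_rel t -> tensor_rel (tmap (M:=M) h t).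
Proof.
case=> /=.
- by move=> f be a; rewrite /tmap /= comp_assoc; apply: tr1.
- by move=> f a b; apply: tr2.
- move=> xi a; rewrite /tmap /= !comp_assoc !comp_epsm.
  by rewrite -!(comp_assoc _ (summ (summ h h) h) xi); apply: tr3.
- by move=> f g al be m; rewrite /tmap /= !comp_assoc; apply: tr4.
- by move=> f g m n; apply: tr5.
- move=> xi g m; rewrite /tmap /= !(comp_assoc h _ xi) comp_fold comp_ret1 comp_ret2.
  by rewrite -!comp_assoc; apply: tr6.
- by move=> f g m; apply: tr7.
- by move=> f m; apply: tr8.
- move=> f g ga a; rewrite /tmap /= comp_assoc comp_copair !(comp_assoc h).
  exact: tr9.
Qed.

Lemma teq_tmap t u : teq t u -> teq (tmap (M:=M) h t) (tmap h u).
Proof.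
elim=> {t u} /=.
- by move=> ?; apply: pe_refl.
- by move=> ??? IH; apply: pe_sym IH.
- by move=> ???? IH1 ? IH2; apply: pe_trans IH1 IH2.
- by move=> ???? ? IH1 ? IH2; apply: pe_add IH1 IH2.
- by move=> ?? ? IH; apply: pe_opp IH.
- by move=> *; apply: pe_assoc.
- by move=> *; apply: pe_comm.
- by move=> *; apply: pe_zerol.
- by move=> *; apply: pe_oppl.
- by move=> t r; apply/pe_rel/tensor_rel_tmap.
Qed.

End TensorFunctor.

Lemma tmap_comp (C : PCat) (E : C) (M : ProtoQuad E) (X Y Z : C)
    (h : hom Y Z) (k : hom X Y) t :
  tmap (M:=M) (comp h k) t = tmap h (tmap k t).
Proof.
by elim: t => //= [[f a|f g m]|t IHt u IHu|t IHt]; rewrite /tmap /= ?comp_assoc //;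
  rewrite -!/(tmap _ _) ?IHt ?IHu.
Qed.

Section OptionalMaps.
Variables (C : PCat) (A T : C).

Definition optm (b : bool) (h : hom A T) : hom A T := if b then h else zerom A T.

Definition optinj (c d : bool) (h : hom A T) : hom A (cop T T) :=
  if c then comp (in1 T T) h else if d then comp (in2 T T) h else zerom A (cop T T).

Lemma fold_optinj c d h : comp (fold T) (optinj c d h) = optm (c || d) h.
Proof. by rewrite /fold /optinj /optm; case: c; case: d; cop_simpl. Qed.

Lemma ret1_optinj c d h : comp (ret1 T T) (optinj c d h) = optm c h.
Proof. by rewrite /ret1 /optinj /optm; case: c; case: d; cop_simpl. Qed.

Lemma ret2_optinj c d h : ~~ (c && d) -> comp (ret2 T T) (optinj c d h) = optm d h.
Proof. by rewrite /ret2 /optinj /optm; case: c; case: d => // _; cop_simpl. Qed.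

End OptionalMaps.

Section SummandProjections.
Variables (C : PCat) (X Y Z : C).
Local Notation W := (cop (cop X Y) Z).

Definition iX : hom X W := comp (in1 _ Z) (in1 X Y).
Definition iY : hom Y W := comp (in1 _ Z) (in2 X Y).
Definition iZ : hom Z W := in2 (cop X Y) Z.

Definition proj3 (b1 b2 b3 : bool) : hom W W :=
  copair (copair (optm b1 iX) (optm b2 iY)) (optm b3 iZ).

Definition split3 (c1 c2 c3 d1 d2 d3 : bool) : hom W (cop W W) :=
  copair (copair (optinj c1 d1 iX) (optinj c2 d2 iY)) (optinj c3 d3 iZ).

Lemma proj3_id : proj3 true true true = idm W.
Proof. by apply: cop3_hom_ext; rewrite /proj3 /optm /iX /iY /iZ; cop_simpl. Qed.

Lemma epsm_diag b1 b2 b3 :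
  comp (epsm W b1 b2 b3) (summ (summ iX iY) iZ) = proj3 b1 b2 b3.
Proof.
by case: b1; case: b2; case: b3;
  apply: cop3_hom_ext; rewrite /epsm /summ /proj3 /optm /iX /iY /iZ; cop_simpl.
Qed.

Lemma fold_split3 c1 c2 c3 d1 d2 d3 :
  comp (fold W) (split3 c1 c2 c3 d1 d2 d3) = proj3 (c1 || d1) (c2 || d2) (c3 || d3).
Proof. by rewrite /split3 !comp_copair !fold_optinj. Qed.

Lemma ret1_split3 c1 c2 c3 d1 d2 d3 :
  comp (ret1 W W) (split3 c1 c2 c3 d1 d2 d3) = proj3 c1 c2 c3.
Proof. by rewrite /split3 !comp_copair !ret1_optinj. Qed.

Lemma ret2_split3 c1 c2 c3 d1 d2 d3 :
  ~~ (c1 && d1) -> ~~ (c2 && d2) -> ~~ (c3 && d3) ->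
  comp (ret2 W W) (split3 c1 c2 c3 d1 d2 d3) = proj3 d1 d2 d3.
Proof. by move=> ? ? ?; rewrite /split3 !comp_copair !ret2_optinj. Qed.

Ltac factor_proj3 :=
  apply: cop3_hom_ext; rewrite /proj3 /optm /iX /iY /iZ /ret1 /ret2 /summ; cop_simpl.

Lemma proj3_110 : proj3 true true false = comp (in1 _ Z) (ret1 (cop X Y) Z).
Proof. by factor_proj3. Qed.

Lemma proj3_101 :
  proj3 true false true = comp (summ (in1 X Y) (idm Z)) (summ (ret1 X Y) (idm Z)).
Proof. by factor_proj3. Qed.

Lemma proj3_011 :
  proj3 false true true = comp (summ (in2 X Y) (idm Z)) (summ (ret2 X Y) (idm Z)).
Proof. by factor_proj3. Qed.

Lemma proj3_100 :
  proj3 true false false = comp (comp iX (ret1 X Y)) (ret1 (cop X Y) Z).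
Proof. by factor_proj3. Qed.

Lemma proj3_010 :
  proj3 false true false = comp (comp iY (ret2 X Y)) (ret1 (cop X Y) Z).
Proof. by factor_proj3. Qed.

Lemma proj3_001 : proj3 false false true = comp iZ (ret2 (cop X Y) Z).
Proof. by factor_proj3. Qed.

End SummandProjections.

Section InclusionExclusion.
Variables (C : PCat) (E : C) (M : ProtoQuad E) (X Y Z : C).
Local Notation W := (cop (cop X Y) Z).
Local Notation cl := (@pcls (tgen M W) (@tensor_rel C E M W)).
Local Notation brk m f g := (cl (FG (TG2 f g m))).
Local Notation e := (@proj3 C X Y Z).

Definition incl_excl (V : zmodType) (phi : hom W W -> V) : V :=
  phi (e true true false) + phi (e true false true) + phi (e false true true)
  - (phi (e true false false) + phi (e false true false) + phi (e false false true)).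

Lemma incl_excl_TG1 (f : hom E W) a :
  cl (FG (TG1 f a)) = incl_excl (fun h => cl (FG (TG1 (comp h f) a))).
Proof.
have := pcls_rel (tr3 (comp (summ (summ (iX X Y Z) (iY X Y Z)) (iZ X Y Z)) f) a).
rewrite /= !pclsD !pclsN !(comp_assoc (epsm W _ _ _)) !epsm_diag proj3_id comp_idl.
move=> rel3; apply/eqP; rewrite -subr_eq0 -{}rel3; apply/eqP.
by rewrite !opprD !opprK !addrA.
Qed.

Lemma brk_splitl c1 c2 c3 d1 d2 d3 m f g :
  ~~ (c1 && d1) -> ~~ (c2 && d2) -> ~~ (c3 && d3) ->
  brk m (comp (e (c1 || d1) (c2 || d2) (c3 || d3)) f) g =
  brk m (comp (e c1 c2 c3) f) g + brk m (comp (e d1 d2 d3) f) g.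
Proof.
move=> ? ? ?; have := pcls_rel (tr6 (comp (split3 X Y Z c1 c2 c3 d1 d2 d3) f) g m).
rewrite pclsB pclsD !comp_assoc fold_split3 ret1_split3 ret2_split3 //.
by move/eqP; rewrite subr_eq0 => /eqP.
Qed.

Lemma brk_swap m f g : brk m f g = brk (Tinv M m) g f.
Proof. by have := pcls_rel (tr7 f g m); rewrite pclsB => /eqP; rewrite subr_eq0 => /eqP. Qed.

Lemma brk_splitr c1 c2 c3 d1 d2 d3 m f g :
  ~~ (c1 && d1) -> ~~ (c2 && d2) -> ~~ (c3 && d3) ->
  brk m f (comp (e (c1 || d1) (c2 || d2) (c3 || d3)) g) =
  brk m f (comp (e c1 c2 c3) g) + brk m f (comp (e d1 d2 d3) g).
Proof. by move=> ? ? ?; rewrite !(brk_swap m f) brk_splitl. Qed.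

Lemma brk_split c1 c2 c3 d1 d2 d3 m f g :
  ~~ (c1 && d1) -> ~~ (c2 && d2) -> ~~ (c3 && d3) ->
  let s := e (c1 || d1) (c2 || d2) (c3 || d3) in
  brk m (comp s f) (comp s g) =
  brk m (comp (e c1 c2 c3) f) (comp (e c1 c2 c3) g)
  + brk m (comp (e c1 c2 c3) f) (comp (e d1 d2 d3) g)
  + brk m (comp (e d1 d2 d3) f) (comp (e c1 c2 c3) g)
  + brk m (comp (e d1 d2 d3) f) (comp (e d1 d2 d3) g).
Proof. by move=> ? ? ? s; rewrite brk_splitl // !brk_splitr // !addrA. Qed.

Lemma incl_excl_TG2 m f g :
  brk m f g = incl_excl (fun h => brk m (comp h f) (comp h g)).
Proof.
have -> : brk m f g = brk m (comp (e true true true) f) (comp (e true true true) g).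
  by rewrite proj3_id !comp_idl.
rewrite /incl_excl (@brk_split true true false false false true _ _ _) //=.
rewrite (@brk_splitl true false false false true false m f (comp (e false false true) g)) //=.
rewrite (@brk_splitr true false false false true false m (comp (e false false true) f) g) //=.
rewrite (@brk_split true false false false false true _ _ _) //=.
rewrite (@brk_split false true false false false true _ _ _) //=.
apply/eqP; rewrite eq_sym subr_eq; apply/eqP; rewrite !addrA.
by rewrite [LHS](ACl (1*3*7*4*8*5*2*6*9)).
Qed.

Lemma incl_excl_gen (x : tgen M W) :
  cl (FG x) = incl_excl (fun h => cl (FG (tgen_map h x))).
Proof. by case: x => [f a|f g m]; [exact: incl_excl_TG1 | exact: incl_excl_TG2]. Qed.

Lemma pcls_tmap (h : hom W W) t :
  cl (tmap h t) = feval (fun x => cl (FG (tgen_map h x))) t.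
Proof. by rewrite pcls_feval feval_fmap. Qed.

Lemma incl_excl_tensor t : cl t = incl_excl (fun h => cl (tmap h t)).
Proof.
by rewrite {1}pcls_feval (eq_feval t incl_excl_gen) /incl_excl fevalB !fevalD !pcls_tmap.
Qed.

Lemma pcls_tmap_factor (W' : C) (r : hom W W') (s : hom W' W) t :
  teq (tmap r t) FZ -> cl (tmap (comp s r) t) = 0.
Proof. by move=> rt0; rewrite tmap_comp; apply/pcls_eqP/(teq_tmap s rt0). Qed.

End InclusionExclusion.

Theorem proposition6p5 (C : PCat) (E : C) (M : ProtoQuad E) :
  tensor_quadratic M.
Proof.
move=> X Y Z t [t_XY [t_Z [t_XZ t_YZ]]]; apply/pcls_eqP.
rewrite incl_excl_tensor /incl_excl proj3_110 proj3_101 proj3_011 proj3_100 proj3_010 proj3_001.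
rewrite !(pcls_tmap_factor _ t_XY) (pcls_tmap_factor _ t_Z).
by rewrite (pcls_tmap_factor _ t_XZ) (pcls_tmap_factor _ t_YZ) !addr0 subrr.
Qed.
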